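(* Let $X\subseteq \mathbb{P}^1\times\mathbb{P}^1\times\mathbb{P}^1$ be a variety of lines such that, for each $h=1,2,3$, $U_h(X)$ resembles a Ferrers diagram. Then $X$ has the $Hyp_4(\star)$-property if and only if for all $a_1,a_2\in[d_1]$, $b_1,b_2\in[d_2]$, $c_1,c_2\in[d_3]$ the following three conditions hold: (1) either $(\mu_{a_1b_1c_1},\mu_{a_2b_1c_1})\neq(1,1)$ or $(\mu_{a_1b_10},\mu_{a_2b_10})\neq(1,0)$; (2) either $(\mu_{a_1b_1c_1},\mu_{a_1b_1c_2})\neq(1,1)$ or $(\mu_{a_10c_1},\mu_{a_10c_2})\neq(1,0)$; (3) either $(\mu_{a_1b_1c_1},\mu_{a_1b_2c_1})\neq(1,1)$ or $(\mu_{0b_1c_1},\mu_{0b_2c_1})\neq(1,0)$.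
   Context: $R=K[x_{1,0},x_{1,1},x_{2,0},x_{2,1},x_{3,0},x_{3,1}]$ ($K$ algebraically closed, characteristic zero) trigraded by $\deg x_{i,j}=\mathbf e_i$, coordinate ring of $\mathbb{P}^1\times\mathbb{P}^1\times\mathbb{P}^1$. A variety of lines is written $X= \bigcup_{(i,j)\in U_3(X)} \mathcal{L}(A_i,B_j)\cup\bigcup_{(i,k)\in U_2(X)} \mathcal{L}(A_i,C_k)\cup \bigcup_{(j,k)\in U_1(X)} \mathcal{L}(B_j,C_k)$, where $\mathcal L(A_1),\ldots,\mathcal L(A_{d_1})$, $\mathcal L(B_1),\ldots,\mathcal L(B_{d_2})$, $\mathcal L(C_1),\ldots,\mathcal L(C_{d_3})$ are the distinct hyperplanes containing some line of $X$, defined by linear forms of degrees $(1,0,0),(0,1,0),(0,0,1)$ respectively, $\mathcal L(F,G)$ is the line defined by $(F,G)$, $U_3(X)\subseteq[d_1]\times[d_2]$, $U_2(X)\subseteq[d_1]\times[d_3]$, $U_1(X)\subseteq[d_2]\times[d_3]$, $[n]=\{1,\dots,n\}$. $U_h(X)$ resembles a Ferrers diagram if after permuting each of its two index sets it becomes a set $U$ with: $(u,v)\in U\Rightarrow (u',v')\in U$ for all $1\le u'\le u$, $1\le v'\le v$. For $P_{ijk}=\mathcal L(A_i)\cap\mathcal L(B_j)\cap\mathcal L(C_k)$, $\mu_{ijk}$ is the number of lines of $X$ through $P_{ijk}$. Moreover $\mu_{ij0}=1$ if $\mathcal L(A_i,B_j)\in X$ and $0$ otherwise; $\mu_{i0k}=1$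 if $\mathcal L(A_i,C_k)\in X$ and $0$ otherwise; $\mu_{0jk}=1$ if $\mathcal L(B_j,C_k)\in X$ and $0$ otherwise. $X$ has the $Hyp_4(\star)$-property if for any $4$ hyperplanes $H_1,\ldots,H_4$ (each defined by a linear form of degree some $\mathbf e_i$) such that $\mathcal{L}(H_i,H_j)$ is a line of $X$ for all $j\neq i-1,i,i+1$ (indices modulo $4$), there is $u$ with $\mathcal{L}(H_u,H_{u+1})$ a line of $X$. *)

From HB Require Import structures.
From mathcomp Require Import all_boot all_order fingroup perm all_algebra.

(* Points of P^1(K): [a:1] <-> Some a, [1:0] <-> None.  A hyperplane of
   P^1 x P^1 x P^1 defined by a linear form of degree e_t is determined by
   its type t (0,1,2 for e_1,e_2,e_3) and the zero of that form in P^1. *)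
Definition P1 (K : fieldType) := option K.
Definition hyperplane (K : fieldType) := ('I_3 * P1 K)%type.

Record lines_variety (K : fieldType) := LinesVariety {
  d1 : nat; d2 : nat; d3 : nat;
  A : 'I_d1 -> P1 K; B : 'I_d2 -> P1 K; C : 'I_d3 -> P1 K;
  A_inj : injective A; B_inj : injective B; C_inj : injective C;
  U3 : {set 'I_d1 * 'I_d2};
  U2 : {set 'I_d1 * 'I_d3};
  U1 : {set 'I_d2 * 'I_d3};
  A_cov : forall i : 'I_d1, (exists j, (i, j) \in U3) \/ (exists k, (i, k) \in U2);
  B_cov : forall j : 'I_d2, (exists i, (i, j) \in U3) \/ (exists k, (j, k) \in U1);
  C_cov : forall k : 'I_d3, (exists i, (i, k) \in U2) \/ (exists j, (j, k) \in U1)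
}.

Arguments d1 {K}. Arguments d2 {K}. Arguments d3 {K}.
Arguments A {K}. Arguments B {K}. Arguments C {K}.
Arguments U1 {K}. Arguments U2 {K}. Arguments U3 {K}.

Set Implicit Arguments. Unset Strict Implicit. Unset Printing Implicit Defensive.

Section Defs.
Variables (K : fieldType) (X : lines_variety K).

Definition tA : 'I_3 := inord 0.
Definition tB : 'I_3 := inord 1.
Definition tC : 'I_3 := inord 2.

Definition same_pair (H H' G G' : hyperplane K) : bool :=
  ((H == G) && (H' == G')) || ((H == G') && (H' == G)).

Definition is_line_of (H H' : hyperplane K) : bool :=
  [exists p in U3 X, same_pair H H' (tA, A X p.1) (tB, B X p.2)] ||
  [exists p in U2 X, same_pair H H' (tA, A X p.1) (tC, C X p.2)] ||
  [exists p in U1 X, same_pair H H' (tB, B X p.1) (tC, C X p.2)].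

(* mu_{ijk}: number of lines of X through P_{ijk} = (A i, B j, C k). *)
Definition mu (i : 'I_(d1 X)) (j : 'I_(d2 X)) (k : 'I_(d3 X)) : nat :=
  #|[set p in U3 X | (A X p.1 == A X i) && (B X p.2 == B X j)]|
  + #|[set p in U2 X | (A X p.1 == A X i) && (C X p.2 == C X k)]|
  + #|[set p in U1 X | (B X p.1 == B X j) && (C X p.2 == C X k)]|.

Definition mu_ij0 (i : 'I_(d1 X)) (j : 'I_(d2 X)) : nat :=
  is_line_of (tA, A X i) (tB, B X j).
Definition mu_i0k (i : 'I_(d1 X)) (k : 'I_(d3 X)) : nat :=
  is_line_of (tA, A X i) (tC, C X k).
Definition mu_0jk (j : 'I_(d2 X)) (k : 'I_(d3 X)) : nat :=
  is_line_of (tB, B X j) (tC, C X k).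

Definition Hyp4_star : Prop :=
  forall H : 'I_4 -> hyperplane K,
    (forall i j : 'I_4,
        j != i -> val j != (i.+1 %% 4)%N -> val j != ((i + 3) %% 4)%N ->
        is_line_of (H i) (H j)) ->
    exists u : 'I_4, is_line_of (H u) (H (inord ((u.+1) %% 4))).
End Defs.

Definition resembles_Ferrers (m n : nat) (U : {set 'I_m * 'I_n}) : Prop :=
  exists (s : {perm 'I_m}) (t : {perm 'I_n}),
    let U' := [set (s p.1, t p.2) | p in U] in
    forall u u' : 'I_m, forall v v' : 'I_n,
      (u, v) \in U' -> (u' <= u)%N -> (v' <= v)%N -> (u', v') \in U'.

From mathcomp Require Import all_boot perm all_algebra.

(* Hyp_4(star) asks: whenever L(H0, H2) and L(H1, H3) are lines of X, so is one
   of the sides L(Hu, Hu+1) of the quadrilateral H0 H1 H2 H3.  A line of X joins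
   hyperplanes of two different kinds (A and B, A and C, or B and C), so up to the
   symmetries of the quadrilateral the two diagonals fall into six configurations.
   If both diagonals have the same kind, say L(A i1, B j1) and L(A i2, B j2), the
   only candidate sides are L(A i2, B j1) and L(A i1, B j2), and one of them is in
   X because U3 is a Ferrers diagram up to permutations.  If the kinds differ, the
   existence of a side is exactly one of the three mu-conditions, once mu_ijk is
   written as [(i, j) in U3] + [(i, k) in U2] + [(j, k) in U1]. *)

Lemma resembles_Ferrers_cross m n (U : {set 'I_m * 'I_n}) : resembles_Ferrers U ->
  forall i1 j1 i2 j2, (i1, j1) \in U -> (i2, j2) \in U -> ((i2, j1) \in U) || ((i1, j2) \in U).
Proof.
case=> s [t /= downU] i1 j1 i2 j2 ij1 ij2.
have st_inj : injective (fun p : 'I_m * 'I_n => (s p.1, t p.2)).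
  by move=> [? ?] [? ?] [/perm_inj-> /perm_inj->].
have memU i j : (i, j) \in U = ((s i, t j) \in [set (s p.1, t p.2) | p in U]).
  by rewrite (mem_imset _ (i, j) st_inj).
(* Only rows need comparing: the earlier row inherits the column of the later one. *)
case: (leqP (s i1) (s i2)) => [le12 | /ltnW le21].
  by apply/orP; right; rewrite memU; apply: (downU (s i2) _ (t j2)); rewrite -?memU.
by apply/orP; left; rewrite memU; apply: (downU (s i1) _ (t j1)); rewrite -?memU.
Qed.

Lemma card_set_in_eq (T : finType) (S : {set T}) x : #|[set p in S | p == x]| = (x \in S).
Proof.
have [xS | xNS] := boolP (x \in S).
  rewrite /= -(cards1 x); apply: eq_card => p; rewrite !inE.
  by case: eqP => [->|]; rewrite ?xS ?andbF.
apply/eqP; rewrite cards_eq0; apply/eqP/setP => p; rewrite !inE.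
by case: eqP => [->|]; rewrite ?(negbTE xNS) ?andbF.
Qed.

Lemma hyperplane_type_eqE :
  ((tA == tB) = false) * ((tA == tC) = false) * ((tB == tC) = false)
  * ((tB == tA) = false) * ((tC == tA) = false) * ((tC == tB) = false).
Proof. by rewrite -!val_eqE /= !inordK. Qed.

Section LinesOfX.
Variables (K : fieldType) (X : lines_variety K).
Local Notation line := (is_line_of X).

Lemma is_line_ofC H H' : line H H' = line H' H.
Proof.
by congr (_ || _ || _); apply: eq_existsb => p; rewrite /same_pair orbC !(andbC (H' == _)).
Qed.

Variant oriented_line : hyperplane K -> hyperplane K -> Prop :=
  | LineAB a b of (a, b) \in U3 X : oriented_line (tA, A X a) (tB, B X b)
  | LineAC a c of (a, c) \in U2 X : oriented_line (tA, A X a) (tC, C X c)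
  | LineBC b c of (b, c) \in U1 X : oriented_line (tB, B X b) (tC, C X c).

Lemma is_line_ofP H H' : line H H' -> oriented_line H H' \/ oriented_line H' H.
Proof.
case/orP=> [/orP[]|] /existsP[[i j] /andP[ij /orP[]/andP[/eqP-> /eqP->]]];
  by [left; constructor | right; constructor].
Qed.

Lemma is_line_of_same t x y : line (t, x) (t, y) = false.
Proof.
apply/negP => /orP[/orP[]|] /existsP[p /andP[_]]; rewrite /same_pair !xpair_eqE;
  by case/orP=> /and3P[/andP[/eqP-> _]]; rewrite hyperplane_type_eqE.
Qed.

Lemma is_line_of_AB a b : line (tA, A X a) (tB, B X b) = ((a, b) \in U3 X).
Proof.
apply/idP/idP => [|ab]; last first.
  by rewrite /is_line_of -orbA; apply/orP; left; apply/existsP; exists (a, b);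
     rewrite ab /same_pair !eqxx.
case/orP=> [/orP[]|] /existsP[[i j] /andP[ij]];
  rewrite /same_pair !xpair_eqE !hyperplane_type_eqE ?andbF //= !eqxx orbF.
by rewrite (inj_eq (@A_inj _ X)) (inj_eq (@B_inj _ X)) => /andP[/eqP-> /eqP->].
Qed.

Lemma is_line_of_AC a c : line (tA, A X a) (tC, C X c) = ((a, c) \in U2 X).
Proof.
apply/idP/idP => [|ac]; last first.
  by rewrite /is_line_of -orbA; apply/orP; right; apply/orP; left; apply/existsP;
     exists (a, c); rewrite ac /same_pair !eqxx.
case/orP=> [/orP[]|] /existsP[[i j] /andP[ij]];
  rewrite /same_pair !xpair_eqE !hyperplane_type_eqE ?andbF //= !eqxx orbF.
by rewrite (inj_eq (@A_inj _ X)) (inj_eq (@C_inj _ X)) => /andP[/eqP-> /eqP->].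
Qed.

Lemma is_line_of_BC b c : line (tB, B X b) (tC, C X c) = ((b, c) \in U1 X).
Proof.
apply/idP/idP => [|bc]; last first.
  by apply/orP; right; apply/existsP; exists (b, c); rewrite bc /same_pair !eqxx.
case/orP=> [/orP[]|] /existsP[[i j] /andP[ij]];
  rewrite /same_pair !xpair_eqE !hyperplane_type_eqE ?andbF //= !eqxx orbF.
by rewrite (inj_eq (@B_inj _ X)) (inj_eq (@C_inj _ X)) => /andP[/eqP-> /eqP->].
Qed.

Definition has_side_line H0 H1 H2 H3 :=
  [|| line H0 H1, line H1 H2, line H2 H3 | line H3 H0].

Definition quads_have_sides := forall H0 H1 H2 H3,
  line H0 H2 -> line H1 H3 -> has_side_line H0 H1 H2 H3.

Lemma Hyp4_starP : Hyp4_star X <-> quads_have_sides.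
Proof.
split=> [hyp H0 H1 H2 H3 l02 l13 | sides H hH].
  pose H (i : 'I_4) := nth H0 [:: H0; H1; H2; H3] i.
  have [u] : exists u : 'I_4, line (H u) (H (inord (u.+1 %% 4))).
    by apply: hyp => -[[|[|[|[|//]]]] ?] -[[|[|[|[|//]]]] ?] //=; rewrite is_line_ofC.
  by case: u => [[|[|[|[|//]]]] ?]; rewrite /H /has_side_line inordK //= => ->; rewrite ?orbT.
have l02 := hH (inord 0) (inord 2); have l13 := hH (inord 1) (inord 3).
rewrite -!val_eqE /= !inordK // in l02 l13.
case/or4P: (sides _ _ _ _ (l02 isT isT isT) (l13 isT isT isT)) => side;
  [exists (inord 0) | exists (inord 1) | exists (inord 2) | exists (inord 3)];
  by rewrite inordK.
Qed.

Lemma has_side_line_swap H0 H1 H2 H3 :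
  has_side_line H0 H1 H2 H3 = has_side_line H1 H0 H3 H2.
Proof.
rewrite /has_side_line (is_line_ofC H1 H0) (is_line_ofC H0 H3).
rewrite (is_line_ofC H3 H2) (is_line_ofC H2 H1).
by case: (line H0 H1) (line H1 H2) (line H2 H3) (line H3 H0) => [] [] [] [].
Qed.

Lemma has_side_line_flip02 H0 H1 H2 H3 :
  has_side_line H0 H1 H2 H3 = has_side_line H2 H1 H0 H3.
Proof.
rewrite /has_side_line (is_line_ofC H2 H1) (is_line_ofC H1 H0).
rewrite (is_line_ofC H0 H3) (is_line_ofC H3 H2).
by case: (line H0 H1) (line H1 H2) (line H2 H3) (line H3 H0) => [] [] [] [].
Qed.

Lemma has_side_line_flip13 H0 H1 H2 H3 :
  has_side_line H0 H1 H2 H3 = has_side_line H0 H3 H2 H1.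
Proof.
rewrite /has_side_line (is_line_ofC H0 H3) (is_line_ofC H3 H2).
rewrite (is_line_ofC H2 H1) (is_line_ofC H1 H0).
by case: (line H0 H1) (line H1 H2) (line H2 H3) (line H3 H0) => [] [] [] [].
Qed.

Lemma quads_have_sides_oriented :
  (forall H0 H1 H2 H3, oriented_line H0 H2 -> oriented_line H1 H3 ->
     has_side_line H0 H1 H2 H3) ->
  quads_have_sides.
Proof.
move=> oriented_sides H0 H1 H2 H3 /is_line_ofP[] o02 /is_line_ofP[] o13.
- exact: oriented_sides.
- by rewrite has_side_line_flip13; apply: oriented_sides.
- by rewrite has_side_line_flip02; apply: oriented_sides.
- by rewrite has_side_line_flip02 has_side_line_flip13; apply: oriented_sides.
Qed.

Lemma has_side_line_same_kind m n (U : {set 'I_m * 'I_n}) t t'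
    (f : 'I_m -> P1 K) (g : 'I_n -> P1 K) :
  resembles_Ferrers U -> (forall i j, line (t, f i) (t', g j) = ((i, j) \in U)) ->
  forall i1 j1 i2 j2, (i1, j1) \in U -> (i2, j2) \in U ->
  has_side_line (t, f i1) (t, f i2) (t', g j1) (t', g j2).
Proof.
move=> FU lineU i1 j1 i2 j2 ij1 ij2.
rewrite /has_side_line !is_line_of_same (is_line_ofC (t', g j2)) !lineU /=.
exact: resembles_Ferrers_cross ij1 ij2.
Qed.

Definition mixed_sides a1 a2 b1 b2 c1 c2 : bool := [&&
  ((a1, b1) \in U3 X) ==> ((a2, c1) \in U2 X) ==>
    has_side_line (tA, A X a1) (tA, A X a2) (tB, B X b1) (tC, C X c1),
  ((a1, c1) \in U2 X) ==> ((b1, c2) \in U1 X) ==>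
    has_side_line (tA, A X a1) (tB, B X b1) (tC, C X c1) (tC, C X c2) &
  ((a1, b2) \in U3 X) ==> ((b1, c1) \in U1 X) ==>
    has_side_line (tA, A X a1) (tB, B X b1) (tB, B X b2) (tC, C X c1)].

Definition mixed_quads_have_sides :=
  forall a1 a2 b1 b2 c1 c2, mixed_sides a1 a2 b1 b2 c1 c2.

Lemma quads_have_sides_mixed : quads_have_sides -> mixed_quads_have_sides.
Proof.
move=> sides a1 a2 b1 b2 c1 c2; apply/and3P; split; do 2!apply/implyP => ?;
  by apply: sides; rewrite ?is_line_of_AB ?is_line_of_AC ?is_line_of_BC.
Qed.

Lemma oriented_quads_have_sides :
  resembles_Ferrers (U3 X) -> resembles_Ferrers (U2 X) -> resembles_Ferrers (U1 X) ->
  mixed_quads_have_sides ->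
  forall H0 H1 H2 H3, oriented_line H0 H2 -> oriented_line H1 H3 ->
    has_side_line H0 H1 H2 H3.
Proof.
move=> F3 F2 F1 msides H0 H1 H2 H3.
case=> [a1 b1 ab1 | a1 c1 ac1 | b1 c1 bc1] [a2 b2 ab2 | a2 c2 ac2 | b2 c2 bc2].
- exact: has_side_line_same_kind F3 is_line_of_AB _ _ _ _ ab1 ab2.
- by case/and3P: (msides a1 a2 b1 b1 c2 c2) => /implyP/(_ ab1)/implyP/(_ ac2).
- by case/and3P: (msides a1 a1 b2 b1 c2 c2) => _ _ /implyP/(_ ab1)/implyP/(_ bc2).
- rewrite has_side_line_swap.
  by case/and3P: (msides a2 a1 b2 b2 c1 c1) => /implyP/(_ ab2)/implyP/(_ ac1).
- exact: has_side_line_same_kind F2 is_line_of_AC _ _ _ _ ac1 ac2.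
- by case/and3P: (msides a1 a1 b2 b2 c1 c2) => _ /implyP/(_ ac1)/implyP/(_ bc2).
- rewrite has_side_line_swap.
  by case/and3P: (msides a2 a2 b1 b2 c1 c1) => _ _ /implyP/(_ ab2)/implyP/(_ bc1).
- rewrite has_side_line_swap.
  by case/and3P: (msides a2 a2 b1 b1 c2 c1) => _ /implyP/(_ ac2)/implyP/(_ bc1).
- exact: has_side_line_same_kind F1 is_line_of_BC _ _ _ _ bc1 bc2.
Qed.

Lemma muE i j k :
  mu i j k = ((i, j) \in U3 X) + ((i, k) \in U2 X) + ((j, k) \in U1 X).
Proof.
rewrite /mu -!card_set_in_eq; congr (_ + _ + _); apply: eq_card => -[p1 p2];
  by rewrite !inE /= ?(inj_eq (@A_inj _ X)) ?(inj_eq (@B_inj _ X)) ?(inj_eq (@C_inj _ X)).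
Qed.

Lemma mu_condition_AB_AC a1 a2 b1 c1 :
  ((mu a1 b1 c1, mu a2 b1 c1) != (1, 1)) || ((mu_ij0 a1 b1, mu_ij0 a2 b1) != (1, 0))
  = ((a1, b1) \in U3 X) ==> ((a2, c1) \in U2 X) ==>
    has_side_line (tA, A X a1) (tA, A X a2) (tB, B X b1) (tC, C X c1).
Proof.
rewrite !muE /mu_ij0 /has_side_line !is_line_of_same (is_line_ofC (tC, _)).
by rewrite !(is_line_of_AB, is_line_of_AC, is_line_of_BC); do ![case: (_ \in _)].
Qed.

Lemma mu_condition_AC_BC a1 b1 c1 c2 :
  ((mu a1 b1 c1, mu a1 b1 c2) != (1, 1)) || ((mu_i0k a1 c1, mu_i0k a1 c2) != (1, 0))
  = ((a1, c1) \in U2 X) ==> ((b1, c2) \in U1 X) ==>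
    has_side_line (tA, A X a1) (tB, B X b1) (tC, C X c1) (tC, C X c2).
Proof.
rewrite !muE /mu_i0k /has_side_line !is_line_of_same (is_line_ofC (tC, _)).
by rewrite !(is_line_of_AB, is_line_of_AC, is_line_of_BC); do ![case: (_ \in _)].
Qed.

Lemma mu_condition_AB_BC a1 b1 b2 c1 :
  ((mu a1 b1 c1, mu a1 b2 c1) != (1, 1)) || ((mu_0jk b1 c1, mu_0jk b2 c1) != (1, 0))
  = ((a1, b2) \in U3 X) ==> ((b1, c1) \in U1 X) ==>
    has_side_line (tA, A X a1) (tB, B X b1) (tB, B X b2) (tC, C X c1).
Proof.
rewrite !muE /mu_0jk /has_side_line !is_line_of_same (is_line_ofC (tC, _)).
by rewrite !(is_line_of_AB, is_line_of_AC, is_line_of_BC); do ![case: (_ \in _)].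
Qed.

Lemma mu_conditionsP a1 a2 b1 b2 c1 c2 :
  [/\ (mu a1 b1 c1, mu a2 b1 c1) != (1, 1) \/ (mu_ij0 a1 b1, mu_ij0 a2 b1) != (1, 0),
      (mu a1 b1 c1, mu a1 b1 c2) != (1, 1) \/ (mu_i0k a1 c1, mu_i0k a1 c2) != (1, 0)
    & (mu a1 b1 c1, mu a1 b2 c1) != (1, 1) \/ (mu_0jk b1 c1, mu_0jk b2 c1) != (1, 0)]
  <-> mixed_sides a1 a2 b1 b2 c1 c2.
Proof.
rewrite /mixed_sides -mu_condition_AB_AC -mu_condition_AC_BC -mu_condition_AB_BC.
by split=> [[/orP-> /orP-> /orP->] | /and3P[/orP ? /orP ? /orP ?]].
Qed.

End LinesOfX.

Local Open Scope ring_scope.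

Theorem proposition3p8 (K : closedFieldType) (charK0 : [pchar K] =i pred0)
  (X : lines_variety K) :
  resembles_Ferrers (U3 X) -> resembles_Ferrers (U2 X) -> resembles_Ferrers (U1 X) ->
  (Hyp4_star X <->
   forall (a1 a2 : 'I_(d1 X)) (b1 b2 : 'I_(d2 X)) (c1 c2 : 'I_(d3 X)),
     [/\ (mu a1 b1 c1, mu a2 b1 c1) != (1, 1)%N
           \/ (mu_ij0 a1 b1, mu_ij0 a2 b1) != (1, 0)%N,
         (mu a1 b1 c1, mu a1 b1 c2) != (1, 1)%N
           \/ (mu_i0k a1 c1, mu_i0k a1 c2) != (1, 0)%N
       & (mu a1 b1 c1, mu a1 b2 c1) != (1, 1)%N
           \/ (mu_0jk b1 c1, mu_0jk b2 c1) != (1, 0)%N]).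
Proof.
(* Neither the algebraic closedness nor the characteristic of K plays a role. *)
move=> F3 F2 F1.
split=> [/Hyp4_starP/quads_have_sides_mixed msides a1 a2 b1 b2 c1 c2 | mu_conds].
  exact/mu_conditionsP.
apply/Hyp4_starP/quads_have_sides_oriented/oriented_quads_have_sides => // a1 a2 b1 b2 c1 c2.
exact/mu_conditionsP.
Qed.
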